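(* Let $\mathbf{H}\in\mathbb{R}^{m\times n}$ have full column rank, with rows indexed by sensors $\{1,\dots,m\}$ and columns by state variables $\{1,\dots,n\}$. Let $\mathcal{S}_o\subseteq\{1,\dots,m\}$, let $\mathbf{H}_o\in\mathbb{R}^{|\mathcal{S}_o|\times n}$ be the submatrix of $\mathbf{H}$ consisting of the rows indexed by $\mathcal{S}_o$, and let $\mathcal{X}_o$ be the set of indices of the nonzero columns of $\mathbf{H}_o$. Suppose that (i) the state variables in $\mathcal{X}_o$ are observable with respect to $\mathcal{S}_o$; (ii) $\mathcal{C}\subseteq\mathcal{S}_o$ is a critical set with respect to $(\mathcal{S}_o,\mathcal{X}_o)$; (iii) the submatrix of $\mathbf{H}$ obtained by removing the rows indexed by $\mathcal{C}$ does not have full column rank. Let $\mathcal{A}_o$ be the set of vectors $\mathbf{b}\in\mathcal{R}(\mathbf{H}_o)$ whose entries corresponding to the sensors in $\mathcal{S}_o\setminus\mathcal{C}$ are all zero. Then: (1) $\mathcal{A}_o$ is a linear subspace of dimension one; (2) for any nonzero $\mathbf{a}_o\in\mathcal{A}_o$, the vector $\mathbf{a}\in\mathbb{R}^m$ defined by $a_i=(\mathbf{a}_o)_i$ (the entry of $\mathbf{a}_o$ corresponding to sensor $i$) for $i\in\mathcal{C}$ and $a_i=0$ for $i\notin\mathcal{C}$ is an unobservable attack, i.e., $\mathbf{a}\neq\mathbf{0}$ and $\mathbf{a}\in\mathcal{R}(\mathbf{H})$.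
   Context: Linearized model $\mathbf{z}=\mathbf{H}\mathbf{x}+\mathbf{e}$. For a sensor set $\mathcal{S}$ and a set of state variables $\mathcal{X}$, let $\mathbf{H}_{\mathcal{S}}$ be the submatrix of $\mathbf{H}$ keeping only rows in $\mathcal{S}$; the variables in $\mathcal{X}$ are observable with respect to $\mathcal{S}$ if every vector in $\mathcal{N}(\mathbf{H}_{\mathcal{S}})$ has zero entries at all coordinates in $\mathcal{X}$. If the variables in $\mathcal{X}$ are observable with respect to $\mathcal{S}$, a subset $\mathcal{C}\subseteq\mathcal{S}$ is a critical set with respect to $(\mathcal{S},\mathcal{X})$ if the variables in $\mathcal{X}$ are not observable with respect to $\mathcal{S}\setminus\mathcal{C}$, while they remain observable with respect to $\mathcal{S}\setminus\mathcal{C}'$ for every strict subset $\mathcal{C}'\subsetneq\mathcal{C}$. An attack adding $\mathbf{a}$ to the data is unobservable iff $\mathbf{a}\ne\mathbf{0}$ and $\mathbf{a}\in\mathcal{R}(\mathbf{H})$ (then $\mathbf{z}+\mathbf{a}=\mathbf{H}\bar{\mathbf{x}}+\mathbf{e}$ for some $\bar{\mathbf{x}}\neq\mathbf{x}$). *)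

From HB Require Import structures.
From mathcomp Require Import all_boot all_order all_algebra.
Set Implicit Arguments. Unset Strict Implicit. Unset Printing Implicit Defensive.
Import Order.TTheory GRing.Theory Num.Theory.
Local Open Scope ring_scope.

Definition subrows (R : Type) (m n : nat) (S : {set 'I_m}) (H : 'M[R]_(m, n))
  : 'M[R]_(#|S|, n) := rowsub (fun k : 'I_#|S| => enum_val k) H.

Definition observable (R : fieldType) (m n : nat) (H : 'M[R]_(m, n))
  (S : {set 'I_m}) (X : {set 'I_n}) : Prop :=
  forall x : 'cV[R]_n, subrows S H *m x = 0 -> forall j, j \in X -> x j 0 = 0.

Definition critical_set (R : fieldType) (m n : nat) (H : 'M[R]_(m, n))
  (S : {set 'I_m}) (X : {set 'I_n}) (C : {set 'I_m}) : Prop :=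
  [/\ C \subset S, observable H S X,
      ~ observable H (S :\: C) X
    & forall C' : {set 'I_m}, C' \proper C -> observable H (S :\: C') X].

Definition in_range (R : fieldType) (m n : nat) (H : 'M[R]_(m, n))
  (b : 'cV[R]_m) : Prop := exists x : 'cV[R]_n, b = H *m x.

Definition unobservable_attack (R : fieldType) (m n : nat) (H : 'M[R]_(m, n))
  (a : 'cV[R]_m) : Prop := a != 0 /\ in_range H a.

Definition nonzero_cols (R : fieldType) (p n : nat) (M : 'M[R]_(p, n))
  : {set 'I_n} := [set j | col j M != 0].

Definition A_o (R : fieldType) (m n : nat) (H : 'M[R]_(m, n))
  (So C : {set 'I_m}) (b : 'cV[R]_#|So|) : Prop :=
  in_range (subrows So H) b /\
  forall k : 'I_#|So|, enum_val k \notin C -> b k 0 = 0.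
Arguments A_o {R m n} H So C b.

From HB Require Import structures.
From mathcomp Require Import all_boot all_order all_algebra.
From Stdlib Require Import Classical.
Set Implicit Arguments.
Unset Strict Implicit.
Unset Printing Implicit Defensive.

Import Order.TTheory GRing.Theory Num.Theory.
Local Open Scope ring_scope.

(* Take x0 witnessing that X_o is not observable from S_o \ C, and a sensor i0
   in C where H x0 does not vanish.  For any H_o y in A_o, with t chosen to
   cancel the entry at i0, H (y - t x0) vanishes on S_o \ (C \ {i0}); since
   C \ {i0} is a proper subset of the critical set C, y - t x0 vanishes on X_o,
   whence H_o y = t H_o x0.  A kernel vector x1 of H with the rows of C removed
   has H x1 nonzero (H is injective) and supported on C, so H_o x1 spans A_o
   too, and the zero padding of any a_o in A_o is a multiple of H x1. *)

Section Subrows.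
Variable R : pzRingType.

Lemma subrowsE m n (S : {set 'I_m}) (M : 'M[R]_(m, n)) k j :
  subrows S M k j = M (enum_val k) j.
Proof. by rewrite mxE. Qed.

Lemma mul_subrows m n p (S : {set 'I_m}) (H : 'M[R]_(m, n)) (x : 'M[R]_(n, p)) :
  subrows S H *m x = subrows S (H *m x).
Proof. exact: mul_rowsub_mx. Qed.

Lemma subrows_eq0 m (S : {set 'I_m}) (b : 'cV[R]_m) :
  subrows S b = 0 <-> {in S, forall i, b i 0 = 0}.
Proof.
split=> [/matrixP b0 i iS | b0].
  by have := b0 (enum_rank_in iS i) 0; rewrite subrowsE enum_rankK_in // mxE.
by apply/matrixP => k j; rewrite ord1 subrowsE mxE b0 // enum_valP.
Qed.

Lemma subrows_support m (S C : {set 'I_m}) (b : 'cV[R]_m) :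
  {in S :\: C, forall i, b i 0 = 0} -> subrows S b != 0 ->
  exists2 i, i \in C & b i 0 != 0.
Proof.
move=> b0 /matrix0Pn[k [j]]; rewrite ord1 subrowsE => bk.
exists (enum_val k) => //.
by apply: contraR bk => kC; rewrite b0 // inE kC enum_valP.
Qed.

Lemma zero_padding_eq m (S C : {set 'I_m}) (a b : 'cV[R]_m) :
  C \subset S -> (forall i, i \notin C -> a i 0 = 0) ->
  (forall i, i \notin C -> b i 0 = 0) ->
  (forall k, enum_val k \in C -> a (enum_val k) 0 = subrows S b k 0) -> a = b.
Proof.
move=> /subsetP CS a0 b0 ab; apply/matrixP => i j; rewrite ord1.
have [iC | /[dup] iC /a0->] := boolP (i \in C); last by rewrite b0.
have iS := CS i iC.
by rewrite -(enum_rankK_in iS iS) ab ?subrowsE // enum_rankK_in.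
Qed.

End Subrows.

Lemma mul_nonzero_cols (R : fieldType) p n (M : 'M[R]_(p, n)) (z : 'cV[R]_n) :
  {in nonzero_cols M, forall j, z j 0 = 0} -> M *m z = 0.
Proof.
move=> z0; apply/matrixP => k i; rewrite ord1 !mxE big1 // => j _.
have [jM | ] := boolP (j \in nonzero_cols M); first by rewrite z0 ?mulr0.
by rewrite inE negbK => /eqP/matrixP/(_ k 0); rewrite !mxE => ->; rewrite mul0r.
Qed.

Section Observability.
Variables (R : fieldType) (m n : nat) (H : 'M[R]_(m, n)).

Lemma not_observableP (S : {set 'I_m}) (X : {set 'I_n}) :
  ~ observable H S X ->
  exists2 x : 'cV[R]_n, {in S, forall i, (H *m x) i 0 = 0}
                      & exists2 j, j \in X & x j 0 != 0.
Proof.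
move=> hX; apply: NNPP => hx; apply: hX => x Sx j jX; apply: NNPP => xj.
apply: hx; exists x; first by apply/subrows_eq0; rewrite -mul_subrows.
by exists j => //; apply/eqP.
Qed.

Lemma A_oP (So C : {set 'I_m}) (b : 'cV[R]_#|So|) :
  A_o H So C b <->
  exists2 y, b = subrows So H *m y & {in So :\: C, forall i, (H *m y) i 0 = 0}.
Proof.
split=> [[[y ->] b0] | [y -> y0]].
  exists y => // i; rewrite inE => /andP[iC iS].
  have := b0 (enum_rank_in iS i).
  by rewrite mul_subrows subrowsE enum_rankK_in //; apply.
split; first by exists y.
by move=> k kC; rewrite mul_subrows subrowsE y0 // inE kC enum_valP.
Qed.

Lemma critical_set_line (S C : {set 'I_m}) (y y' : 'cV[R]_n) i0 :
  critical_set H S (nonzero_cols (subrows S H)) C ->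
  i0 \in C -> (H *m y') i0 0 != 0 ->
  {in S :\: C, forall i, (H *m y) i 0 = 0} ->
  {in S :\: C, forall i, (H *m y') i 0 = 0} ->
  subrows S H *m y = ((H *m y) i0 0 / (H *m y') i0 0) *: (subrows S H *m y').
Proof.
move=> [_ _ _ Cmin] i0C y'i0 y0 y'0.
set u := H *m y in y0 *; set u' := H *m y' in y'i0 y'0 *; set t := _ / _.
have Hz0 : subrows (S :\: (C :\ i0)) H *m (y - t *: y') = 0.
  rewrite mul_subrows mulmxBr -scalemxAr -/u -/u'; clearbody u u'.
  apply/subrows_eq0 => i.
  rewrite !inE negb_and negbK !mxE => /andP[/orP[/eqP-> | iC] iS].
    by rewrite /t divfK // subrr.
  by rewrite y0 ?y'0 ?inE ?iC // mulr0 subrr.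
apply/eqP; rewrite scalemxAr -subr_eq0 -mulmxBr; apply/eqP/mul_nonzero_cols.
exact: Cmin (properD1 i0C) _ Hz0.
Qed.

Lemma A_o_span (So C : {set 'I_m}) (y' : 'cV[R]_n) i0 :
  critical_set H So (nonzero_cols (subrows So H)) C ->
  i0 \in C -> (H *m y') i0 0 != 0 ->
  {in So :\: C, forall i, (H *m y') i 0 = 0} ->
  forall b, A_o H So C b <-> exists c, b = c *: (subrows So H *m y').
Proof.
move=> critC i0C y'i0 y'0 b; rewrite A_oP.
split=> [[y -> y0] | [c ->]].
  by eexists; exact: critical_set_line critC i0C y'i0 y0 y'0.
by exists (c *: y') => [|i iS]; rewrite -scalemxAr // mxE y'0 ?mulr0.
Qed.

Lemma exists_nonzero_kernel p (A : 'M[R]_(p, n)) :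
  (\rank A < n)%N -> exists2 x : 'cV[R]_n, x != 0 & A *m x = 0.
Proof.
move=> rkA; have : kermx A^T != 0.
  by rewrite kermx_eq0 /row_free mxrank_tr neq_ltn rkA.
case/rowV0Pn => v /sub_kermxP vA v_neq0; exists v^T.
  by rewrite -(inj_eq trmx_inj) trmxK trmx0.
by rewrite -[A]trmxK -trmx_mul vA trmx0.
Qed.

Lemma exists_image_supported_on (C : {set 'I_m}) :
  \rank H = n -> (\rank (subrows (~: C) H) < n)%N ->
  exists2 x : 'cV[R]_n, {in ~: C, forall i, (H *m x) i 0 = 0}
                      & exists2 i, i \in C & (H *m x) i 0 != 0.
Proof.
move=> rkH rkHC; have [x x_neq0 xC] := exists_nonzero_kernel rkHC.
have x_out : {in ~: C, forall i, (H *m x) i 0 = 0}.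
  by apply/subrows_eq0; rewrite -mul_subrows.
have /matrix0Pn[i [j]] : H *m x != 0.
  have rfH : row_full H by rewrite /row_full rkH.
  apply: contraNneq x_neq0 => Hx0.
  by apply/eqP/(row_full_inj rfH); rewrite mulmx0.
rewrite ord1 => Hxi; exists x => //; exists i => //.
by apply: contraR Hxi => iC; rewrite x_out // inE.
Qed.

End Observability.

Theorem theorem3 (R : realFieldType) (m n : nat) (H : 'M[R]_(m, n))
  (So C : {set 'I_m}) :
  \rank H = n ->
  observable H So (nonzero_cols (subrows So H)) ->
  critical_set H So (nonzero_cols (subrows So H)) C ->
  (\rank (subrows (~: C) H) < n)%N ->
  (exists v : 'cV[R]_#|So|, v != 0 /\
     forall b : 'cV[R]_#|So|, A_o H So C b <-> exists c : R, b = c *: v) /\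
  (forall a_o : 'cV[R]_#|So|, A_o H So C a_o -> a_o != 0 ->
   forall a : 'cV[R]_m,
     (forall i, i \notin C -> a i 0 = 0) ->
     (forall k : 'I_#|So|, enum_val k \in C -> a (enum_val k) 0 = a_o k 0) ->
     unobservable_attack H a).
Proof.
move=> rkH obsSo critC rkHC; have [CSo _ not_obs _] := critC.
have [x0 x0_out [j0 j0X x0j0]] := not_observableP not_obs.
have v_neq0 : subrows So H *m x0 != 0.
  by apply: contraNneq x0j0 => /obsSo/(_ j0 j0X)->.
have [i0 i0C x0i0] : exists2 i0, i0 \in C & (H *m x0) i0 0 != 0.
  by apply: subrows_support x0_out _; rewrite -mul_subrows.
split.
  exists (subrows So H *m x0); split=> //.
  exact: A_o_span critC i0C x0i0 x0_out.
move=> a_o ao_A ao_neq0 a a_out a_in.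
have [x1 x1_out [i1 i1C x1i1]] := exists_image_supported_on rkH rkHC.
have x1_out' : {in So :\: C, forall i, (H *m x1) i 0 = 0}.
  by apply: sub_in1 x1_out => i; rewrite !inE => /andP[].
have [c ao_c] := iffLR (A_o_span critC i1C x1i1 x1_out' a_o) ao_A.
split.
  have /matrix0Pn[k [j]] := ao_neq0; rewrite ord1 => aok.
  have kC : enum_val k \in C by apply: contraR aok => kC; rewrite ao_A.2.
  by apply/matrix0Pn; exists (enum_val k), 0; rewrite a_in.
exists (c *: x1); apply: zero_padding_eq CSo a_out _ _ => [i iC | k kC].
  by rewrite -scalemxAr mxE x1_out ?mulr0 // inE.
by rewrite a_in // ao_c scalemxAr mul_subrows.
Qed.
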